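(* Let $P_1,\ldots,P_n$ be mutually orthogonal self-adjoint projections on a real or complex Hilbert space $\mathcal{H}$, all of the same nonzero rank $k$, where $k$ may be finite or infinite. Let $r_1,\ldots,r_n\ge0$ be real numbers with $r=\sum_{i=1}^n r_i$, and set $A=r_1P_1+\cdots+r_nP_n$. If $r$ is an integer and $r\ge n$, then there exist self-adjoint projections $Q_1,\ldots,Q_r$, each of rank $k$, such that $A=Q_1+\cdots+Q_r$. *)

From HB Require Import structures.
From mathcomp Require Import all_boot all_order all_algebra.
From mathcomp Require Import reals.
From mathcomp Require Import complex.
Set Implicit Arguments. Unset Strict Implicit. Unset Printing Implicit Defensive.
Import Order.TTheory GRing.Theory Num.Theory.
Local Open Scope ring_scope.

Section Hilb.
Variables (K : numFieldType) (conj : K -> K) (H : lmodType K).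

Definition hilbert (ip : H -> H -> K) : Prop :=
  [/\ (forall (a : K) (x y z : H), ip (a *: x + y) z = a * ip x z + ip y z),
      (forall x y : H, ip y x = conj (ip x y)),
      (forall x : H, 0 <= ip x x),
      (forall x : H, ip x x = 0 -> x = 0) &
      (forall u : nat -> H,
         (forall e : K, 0 < e -> exists N : nat, forall m k : nat,
             (N <= m)%N -> (N <= k)%N -> ip (u m - u k) (u m - u k) < e) ->
         exists l : H, forall e : K, 0 < e -> exists N : nat, forall k : nat,
             (N <= k)%N -> ip (u k - l) (u k - l) < e)].

Definition lin_op (T : H -> H) : Prop :=
  forall (a : K) (x y : H), T (a *: x + y) = a *: T x + T y.

Definition sa_proj (ip : H -> H -> K) (P : H -> H) : Prop :=
  [/\ lin_op P, (forall x, P (P x) = P x) & (forall x y, ip (P x) y = ip x (P y))].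

(* rank P = rank Q (as Hilbert dimensions, finite or infinite): the ranges of
   P and Q are isometrically isomorphic, i.e. there is a linear map U which
   restricts to a unitary from ran P onto ran Q. *)
Definition same_rank (ip : H -> H -> K) (P Q : H -> H) : Prop :=
  exists U : H -> H,
    [/\ lin_op U,
        (forall x y, ip (U (P x)) (U (P y)) = ip (P x) (P y)),
        (forall x, Q (U (P x)) = U (P x)) &
        (forall y, exists x, U (P x) = Q y)].

Definition lemma7_for : Prop :=
  forall (ip : H -> H -> K), hilbert ip ->
  forall (n : nat) (P : 'I_n -> H -> H) (r : 'I_n -> K) (m : nat),
    (forall i, sa_proj ip (P i)) ->
    (forall i j, i != j -> forall x, P i (P j x) = 0) ->
    (forall i, exists x, P i x != 0) ->
    (forall i j, same_rank ip (P i) (P j)) ->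
    (forall i, 0 <= r i) ->
    \sum_(i < n) r i = m%:R ->
    (n <= m)%N ->
    exists Q : 'I_m -> H -> H,
      [/\ (forall j, sa_proj ip (Q j)),
          (forall j i, same_rank ip (Q j) (P i)) &
          (forall x, \sum_(i < n) r i *: P i x = \sum_(j < m) Q j x)].
End Hilb.

(* Write each weight as r_i = d_i with d_i >= 0 real.  As sum_i d_i = r >= n,
   the matrix diag(d_1, ..., d_n) is the frame operator sum_j w_j w_j^T of r
   unit vectors w_j of R^n: start from the orthogonal vectors sqrt(d_i) e_i,
   padded by zero vectors, and repeatedly rotate a vector of norm > 1 against
   one of norm < 1 in their plane until one of them has norm 1; split it off.
   Since the P_i have equal rank, there are partial isometries E_ab from
   ran P_b onto ran P_a with E_ab E_cd = [b = c] E_ad, E_ab^* = E_ba and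
   E_aa = P_a, i.e. a *-representation of the n x n real matrices.  The images
   Q_j of the rank-one projections w_j w_j^T are projections, each carried
   unitarily onto ran P_a by sum_b w_jb E_ab, and they sum to the image of
   diag(d), which is A. *)

From HB Require Import structures.
From mathcomp Require Import all_boot all_order all_algebra.
From mathcomp Require Import reals complex.
From mathcomp Require Import ring lra.
Set Implicit Arguments. Unset Strict Implicit. Unset Printing Implicit Defensive.
Import Order.TTheory GRing.Theory Num.Theory.
Local Open Scope ring_scope.

Lemma big_replace (V : zmodType) m (j : 'I_m) (F G : 'I_m -> V) :
  (forall k, k != j -> G k = F k) -> \sum_k G k = \sum_k F k - F j + G j.
Proof.
move=> eqGF; rewrite (bigD1 j) //= [in RHS](bigD1 j) //= (eq_bigr F) => [|k /eqGF //].
by rewrite [F j + _]addrC addrK addrC.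
Qed.

Lemma exists_ge1_of_sum_ge (R : realDomainType) m (x : 'I_m.+1 -> R) :
  m.+1%:R <= \sum_k x k -> exists k, 1 <= x k.
Proof.
move=> sum_ge; apply/existsP; apply: contraLR sum_ge => /existsPn all_lt1.
rewrite -ltNge -[in X in _ < X](card_ord m.+1) -sumr_const.
apply: ltr_sum => [|k _]; first by apply/hasP; exists ord0; rewrite ?mem_index_enum.
by rewrite ltNge all_lt1.
Qed.

Lemma exists_lt1_of_sum_lt (R : realDomainType) m (x : 'I_m -> R) :
  \sum_k x k < m%:R -> exists k, x k < 1.
Proof.
move=> sum_lt; apply/existsP; apply: contraLR sum_lt => /existsPn all_ge1.
rewrite -leNgt -[in X in X <= _](card_ord m) -sumr_const.
by apply: ler_sum => k _; rewrite leNgt all_ge1.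
Qed.

Section UnitFrames.
Variables (R : rcfType) (n : nat).
Implicit Types (u v p q : 'rV[R]_n).

Definition dot u v := \sum_a u 0 a * v 0 a.

Definition orthogonal_family m (v : 'I_m -> 'rV[R]_n) :=
  forall k l, k != l -> dot (v k) (v l) = 0.

Definition frame_op m (v : 'I_m -> 'rV[R]_n) : 'M[R]_n := \sum_k (v k)^T *m v k.

Lemma dotC u v : dot u v = dot v u.
Proof. by apply: eq_bigr => a _; rewrite mulrC. Qed.

Lemma dotDl s t u v w : dot (s *: u + t *: v) w = s * dot u w + t * dot v w.
Proof.
rewrite /dot !mulr_sumr -big_split /=; apply: eq_bigr => a _.
by rewrite !mxE mulrDl !mulrA.
Qed.

Lemma frame_opE m (v : 'I_m -> 'rV[R]_n) a b :
  frame_op v a b = \sum_k v k 0 a * v k 0 b.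
Proof. by rewrite summxE; apply: eq_bigr => k _; rewrite !mxE big_ord1 !mxE. Qed.

Lemma orthogonal_family_replace m (v : 'I_m -> 'rV[R]_n) j q :
  orthogonal_family v -> (forall l, l != j -> dot q (v l) = 0) ->
  orthogonal_family (fun k => if k == j then q else v k).
Proof.
move=> orth_v q_orth k l kl.
case: (eqVneq k j) => [kj|kj]; case: (eqVneq l j) => [lj|lj].
- by move: kl; rewrite kj lj eqxx.
- exact: q_orth.
- by rewrite dotC; apply: q_orth.
- exact: orth_v.
Qed.

(* Rotate [p] and [q] in their plane by the angle whose squared cosine is
   [(1 - dot q q) / (dot p p - dot q q)]: the frame operator is unchanged and
   the rotated [p] becomes a unit vector. *)
Lemma rotate_pair p q : dot p q = 0 -> dot q q < 1 < dot p p ->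
  exists p' q', [/\ dot p' p' = 1, dot q' q' = dot p p + dot q q - 1,
    (forall z, dot p z = 0 -> dot q z = 0 -> dot q' z = 0) &
    p'^T *m p' + q'^T *m q' = p^T *m p + q^T *m q].
Proof.
move=> pq0 /andP[b_lt1 a_gt1]; have qp0 : dot q p = 0 by rewrite dotC.
set a := dot p p in a_gt1 *; set b := dot q q in b_lt1 *.
have ab_gt0 : 0 < a - b by lra.
set c := Num.sqrt ((1 - b) / (a - b)); set s := Num.sqrt ((a - 1) / (a - b)).
have c2 : c ^+ 2 = (1 - b) / (a - b) by rewrite sqr_sqrtr // divr_ge0 //; lra.
have s2 : s ^+ 2 = (a - 1) / (a - b) by rewrite sqr_sqrtr // divr_ge0 //; lra.
have cs1 : c ^+ 2 + s ^+ 2 = 1.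
  by rewrite c2 s2 -mulrDl (_ : 1 - b + (a - 1) = a - b) ?divff ?gt_eqF //; ring.
have cs_ab : c ^+ 2 * a + s ^+ 2 * b = 1.
  rewrite c2 s2 ![_ / (a - b) * _]mulrAC -mulrDl.
  by rewrite (_ : (1 - b) * a + (a - 1) * b = a - b) ?divff ?gt_eqF //; ring.
exists (c *: p + s *: q), ((- s) *: p + c *: q); split.
- rewrite dotDl ![dot _ (_ + _)]dotC !dotDl pq0 qp0 -/a -/b.
  by rewrite -cs_ab; ring.
- rewrite dotDl ![dot _ (_ + _)]dotC !dotDl pq0 qp0 -/a -/b.
  transitivity ((c ^+ 2 + s ^+ 2) * (a + b) - (c ^+ 2 * a + s ^+ 2 * b)); first by ring.
  by rewrite cs1 cs_ab mul1r.
- by move=> z pz0 qz0; rewrite dotDl pz0 qz0 !mulr0 addr0.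
apply/matrixP => x y; rewrite !mxE !big_ord1 !mxE.
transitivity ((c ^+ 2 + s ^+ 2) * (p 0 x * p 0 y + q 0 x * q 0 y)); first by ring.
by rewrite cs1 mul1r.
Qed.

Lemma frame_peel m (v : 'I_m.+1 -> 'rV[R]_n) :
  orthogonal_family v -> \sum_k dot (v k) (v k) = m.+1%:R ->
  exists w0 (v' : 'I_m -> 'rV[R]_n), [/\ dot w0 w0 = 1, orthogonal_family v',
    \sum_k dot (v' k) (v' k) = m%:R & frame_op v = w0^T *m w0 + frame_op v'].
Proof.
move=> orth_v sum_v.
have [i a_ge1] : exists i, 1 <= dot (v i) (v i).
  by apply: exists_ge1_of_sum_ge; rewrite sum_v.
pose v' (k : 'I_m) := v (lift i k).
have orth_v' : orthogonal_family v'.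
  by move=> k l kl; apply: orth_v; rewrite (inj_eq (@lift_inj _ i)).
have sum_split : \sum_k dot (v k) (v k) = dot (v i) (v i) + \sum_k dot (v' k) (v' k).
  by rewrite (bigD1_ord i).
have frame_split : frame_op v = (v i)^T *m v i + frame_op v'.
  by rewrite /frame_op (bigD1_ord i).
move: sum_split; rewrite sum_v mulrSr => sum_split.
have [a1 | a_neq1] := eqVneq (dot (v i) (v i)) 1.
  by exists (v i), v'; split => //; lra.
have a_gt1 : 1 < dot (v i) (v i) by rewrite lt_def a_neq1 a_ge1.
have [j b_lt1] : exists j, dot (v' j) (v' j) < 1.
  by apply: exists_lt1_of_sum_lt; lra.
have bounds : dot (v' j) (v' j) < 1 < dot (v i) (v i) by rewrite b_lt1 a_gt1.
have [p' [q' [p'1 q'q' q'_orth frame_pq]]] :=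
  rotate_pair (orth_v i (lift i j) (neq_lift i j)) bounds.
pose v'' (k : 'I_m) := if k == j then q' else v' k.
have v''E (F : 'rV[R]_n -> 'M[R]_n) : \sum_k F (v'' k) = \sum_k F (v' k) - F (v' j) + F q'.
  rewrite (big_replace (j := j) (F := fun k => F (v' k))) => [|k /negbTE kj].
    by rewrite /v'' eqxx.
  by rewrite /v'' kj.
exists p', v''; split => //.
- apply: orthogonal_family_replace => // l lj.
  apply: q'_orth; first by apply: orth_v; rewrite neq_lift.
  by apply: orth_v'; rewrite eq_sym.
- rewrite (big_replace (j := j) (F := fun k => dot (v' k) (v' k))) => [|k /negbTE kj].
    by rewrite /v'' eqxx q'q'; lra.
  by rewrite /v'' kj.
rewrite frame_split /frame_op (v''E (fun z => z^T *m z)) -/(frame_op v').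
rewrite [RHS]addrCA frame_pq.
by rewrite [RHS]addrCA addrNK.
Qed.

Lemma unit_frame m (v : 'I_m -> 'rV[R]_n) :
  orthogonal_family v -> \sum_k dot (v k) (v k) = m%:R ->
  exists w : 'I_m -> 'rV[R]_n, (forall k, dot (w k) (w k) = 1) /\ frame_op w = frame_op v.
Proof.
elim: m v => [|m IH] v orth_v sum_v; first by exists v; split => [[]|].
have [w0 [v' [w01 orth_v' sum_v' ->]]] := frame_peel orth_v sum_v.
have [w' [w'1 <-]] := IH v' orth_v' sum_v'.
exists (fun k => if unlift ord0 k is Some k' then w' k' else w0); split.
  by move=> k; case: unliftP.
by rewrite /frame_op big_ord_recl unlift_none; under eq_bigr do rewrite liftK.
Qed.

Lemma unit_frame_diag m (d : 'I_n -> R) :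
  (forall a, 0 <= d a) -> \sum_a d a = m%:R -> (n <= m)%N ->
  exists w : 'I_m -> 'rV[R]_n,
    (forall k, dot (w k) (w k) = 1) /\ frame_op w = diag_mx (\row_a d a).
Proof.
move=> d_ge0 sum_d le_nm.
pose v (k : 'I_m) : 'rV[R]_n := \row_a ((a == k :> nat)%:R * Num.sqrt (d a)).
have sum_at (a : 'I_n) (x : R) : \sum_(k < m) (a == k :> nat)%:R * x = x.
  rewrite (bigD1 (widen_ord le_nm a)) //= eqxx mul1r big1 ?addr0 // => k ka.
  have -> : (a == k :> nat) = false.
    by apply: (contraNF _ ka) => /eqP ak; apply/eqP/val_inj.
  by rewrite mul0r.
have v_mul k a b : v k 0 a * v k 0 b = (a == k :> nat)%:R * ((a == b)%:R * d a).
  rewrite !mxE; case: (eqVneq (a : nat) k) => [ak|_]; last by rewrite !mul0r.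
  case: (eqVneq a b) => [<-|ab]; first by rewrite ak eqxx !mul1r -expr2 sqr_sqrtr.
  suff -> : (b == k :> nat) = false by rewrite !mul0r !mulr0.
  by apply/negbTE; rewrite -ak val_eqE eq_sym.
have orth_v : orthogonal_family v.
  move=> k l kl; apply: big1 => a _; rewrite !mxE.
  case: (eqVneq (a : nat) k) => [ak|_]; last by rewrite !mul0r.
  case: (eqVneq (a : nat) l) => [al|_]; last by rewrite mul0r mulr0.
  by move: kl; rewrite (_ : k = l) ?eqxx //; apply: ord_inj; rewrite -ak -al.
have sum_v : \sum_k dot (v k) (v k) = m%:R.
  rewrite -sum_d /dot exchange_big /=; apply: eq_bigr => a _.
  by under eq_bigr do rewrite v_mul eqxx mul1r; rewrite sum_at.
have [w [w1 frame_w]] := unit_frame orth_v sum_v; exists w; split => //.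
apply/matrixP => a b; rewrite frame_w frame_opE !mxE -mulr_natl.
by under eq_bigr do rewrite v_mul; rewrite sum_at.
Qed.
End UnitFrames.

Section LinearOperators.
Variables (K : numFieldType) (H : lmodType K).
Implicit Types (T : H -> H).

Definition linear_of_lin_op T (linT : lin_op T) : {linear H -> H} :=
  HB.pack T (GRing.isLinear.Build K H H *:%R T linT).

Lemma lin_op0 T (linT : lin_op T) : T 0 = 0.
Proof. exact: (linear0 (linear_of_lin_op linT)). Qed.

Lemma lin_opB T (linT : lin_op T) x y : T (x - y) = T x - T y.
Proof. exact: (linearB (linear_of_lin_op linT)). Qed.

Lemma lin_op_sumZ T (linT : lin_op T) (I : Type) (r : seq I) (s : I -> K) (F : I -> H) :
  T (\sum_(i <- r) s i *: F i) = \sum_(i <- r) s i *: T (F i).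
Proof.
pose L := linear_of_lin_op linT.
transitivity (\sum_(i <- r) T (s i *: F i)); first exact: (linear_sum L).
by apply: eq_bigr => i _; exact: (linearZ_LR L).
Qed.

Lemma lin_op_comp T S : lin_op T -> lin_op S -> lin_op (T \o S).
Proof. by move=> linT linS a x y; rewrite /= linS linT. Qed.

Lemma lin_op_sumZ_fun (I : finType) (s : I -> K) (F : I -> H -> H) :
  (forall i, lin_op (F i)) -> lin_op (fun x => \sum_i s i *: F i x).
Proof.
move=> linF a x y; rewrite scaler_sumr -big_split; apply: eq_bigr => i _.
by rewrite linF scalerDr !scalerA mulrC.
Qed.

Lemma sum_delta_scale (I : finType) (i : I) (F : I -> H) :
  \sum_j (i == j)%:R *: F j = F i.
Proof.
rewrite (bigD1 i) //= eqxx scale1r big1 ?addr0 // => j.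
by rewrite eq_sym => /negbTE ->; rewrite scale0r.
Qed.
End LinearOperators.

Section InnerProduct.
Variables (K : numFieldType) (conj : {rmorphism K -> K}) (H : lmodType K).
Variable ip : H -> H -> K.
Hypotheses (ipL : forall (a : K) (x y z : H), ip (a *: x + y) z = a * ip x z + ip y z)
  (ipC : forall x y : H, ip y x = conj (ip x y)).

Definition ip_scalar_l (z : H) : {linear H -> K^o} :=
  HB.pack (fun x => ip x z)
    (GRing.isLinear.Build K H K^o *:%R _ (fun a x y => ipL a x y z)).

Lemma ip0l z : ip 0 z = 0.
Proof. exact: (linear0 (ip_scalar_l z)). Qed.

Lemma ip_sumZl (I : Type) (r : seq I) (s : I -> K) (F : I -> H) z :
  ip (\sum_(i <- r) s i *: F i) z = \sum_(i <- r) s i * ip (F i) z.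
Proof.
transitivity (\sum_(i <- r) ip (s i *: F i) z); first exact: (linear_sum (ip_scalar_l z)).
by apply: eq_bigr => i _; exact: (linearZ_LR (ip_scalar_l z)).
Qed.

Lemma ip_sumZr (I : Type) (r : seq I) (s : I -> K) (F : I -> H) z :
  (forall i, conj (s i) = s i) ->
  ip z (\sum_(i <- r) s i *: F i) = \sum_(i <- r) s i * ip z (F i).
Proof.
move=> s_real; rewrite ipC ip_sumZl rmorph_sum; apply: eq_bigr => i _.
by rewrite rmorphM s_real -ipC.
Qed.
End InnerProduct.

Section MatrixUnits.
Variables (K : numFieldType) (conj : {rmorphism K -> K}) (H : lmodType K).
Variable ip : H -> H -> K.
Hypotheses (ipL : forall (a : K) (x y z : H), ip (a *: x + y) z = a * ip x z + ip y z)
  (ipC : forall x y : H, ip y x = conj (ip x y)).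
Variables (n : nat) (P : 'I_n -> H -> H) (E : 'I_n -> 'I_n -> H -> H).
Hypotheses (E_lin : forall a b, lin_op (E a b))
  (E_mul : forall a b c d x, E a b (E c d x) = (b == c)%:R *: E a d x)
  (E_adj : forall a b x y, ip (E a b x) y = ip x (E b a y))
  (E_diag : forall a x, E a a x = P a x).

(* The image of the rank-one matrix [c c^T] under the representation sending
   the matrix unit e_ab to [E a b]. *)
Definition vec_proj (c : 'I_n -> K) x := \sum_a \sum_b (c a * c b) *: E a b x.

Lemma sum_vec_proj m (c : 'I_m -> 'I_n -> K) (r : 'I_n -> K) :
  (forall a b, \sum_j c j a * c j b = r a *+ (a == b)) ->
  forall x, \sum_j vec_proj (c j) x = \sum_a r a *: P a x.
Proof.
move=> gram x; rewrite exchange_big; apply: eq_bigr => a _; rewrite -E_diag.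
rewrite exchange_big -(sum_delta_scale a (fun b => r a *: E a b x)) /=.
by apply: eq_bigr => b _; rewrite -scaler_suml gram scalerA mulr_natl.
Qed.

Section OneVector.
Variable c : 'I_n -> K.
Hypotheses (c_real : forall a, conj (c a) = c a) (c_norm : \sum_a c a * c a = 1).

Definition row_op a x := \sum_b c b *: E a b x.
Definition col_op b x := \sum_a c a *: E a b x.

Lemma vec_projE x : vec_proj c x = \sum_a c a *: row_op a x.
Proof.
by apply: eq_bigr => a _; rewrite scaler_sumr; apply: eq_bigr => b _; rewrite scalerA.
Qed.

Lemma lin_op_row_op a : lin_op (row_op a).
Proof. exact: lin_op_sumZ_fun. Qed.

Lemma lin_op_vec_proj : lin_op (vec_proj c).
Proof.
move=> s x y; rewrite !vec_projE.
by apply: (lin_op_sumZ_fun c); exact: lin_op_row_op.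
Qed.

Lemma E_row_op a b d x : E a b (row_op d x) = (b == d)%:R *: row_op a x.
Proof.
rewrite (lin_op_sumZ (E_lin a b)) /row_op scaler_sumr; apply: eq_bigr => e _.
by rewrite E_mul !scalerA mulrC.
Qed.

Lemma E_col_op a b d y : E a b (col_op d y) = c b *: E a d y.
Proof.
rewrite (lin_op_sumZ (E_lin a b)) -(sum_delta_scale b (fun e => c e *: E a d y)).
by apply: eq_bigr => e _; rewrite E_mul !scalerA mulrC.
Qed.

Lemma E_vec_proj a b x : E a b (vec_proj c x) = c b *: row_op a x.
Proof.
rewrite vec_projE (lin_op_sumZ (E_lin a b)).
rewrite -(sum_delta_scale b (fun e => c e *: row_op a x)).
by apply: eq_bigr => e _; rewrite E_row_op !scalerA mulrC.
Qed.

Lemma row_op_vec_proj a x : row_op a (vec_proj c x) = row_op a x.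
Proof.
rewrite {1}/row_op; under eq_bigr do rewrite E_vec_proj scalerA.
by rewrite -scaler_suml c_norm scale1r.
Qed.

Lemma vec_proj_idem x : vec_proj c (vec_proj c x) = vec_proj c x.
Proof.
by rewrite vec_projE; under eq_bigr do rewrite row_op_vec_proj; rewrite -vec_projE.
Qed.

Lemma vec_proj_sa x y : ip (vec_proj c x) y = ip x (vec_proj c y).
Proof.
rewrite !vec_projE (ip_sumZl ipL) (ip_sumZr ipL ipC) //.
under eq_bigr do rewrite (ip_sumZl ipL) mulr_sumr.
under [RHS]eq_bigr do rewrite (ip_sumZr ipL ipC) // mulr_sumr.
rewrite exchange_big; apply: eq_bigr => b _; apply: eq_bigr => a _.
by rewrite E_adj mulrCA.
Qed.

Lemma ip_row_op a x y : ip (row_op a x) (row_op a y) = ip x (vec_proj c y).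
Proof.
rewrite (ip_sumZl ipL) vec_projE (ip_sumZr ipL ipC) //; apply: eq_bigr => b _.
by rewrite E_adj E_row_op eqxx scale1r.
Qed.

Lemma vec_proj_same_rank a : same_rank ip (vec_proj c) (P a).
Proof.
exists (row_op a); split.
- exact: lin_op_row_op.
- by move=> x y; rewrite !row_op_vec_proj ip_row_op vec_proj_sa vec_proj_idem.
- by move=> x; rewrite -E_diag E_row_op eqxx scale1r.
move=> y; exists (col_op a y); rewrite -E_diag row_op_vec_proj {1}/row_op.
by under eq_bigr do rewrite E_col_op scalerA; rewrite -scaler_suml c_norm scale1r.
Qed.
End OneVector.
End MatrixUnits.

Section MatrixUnitsOfProjections.
Variables (K : numFieldType) (H : lmodType K) (ip : H -> H -> K).
Hypotheses (ipL : forall (a : K) (x y z : H), ip (a *: x + y) z = a * ip x z + ip y z)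
  (ip_def : forall x : H, ip x x = 0 -> x = 0).

Definition range_unitary (P Q U : H -> H) :=
  [/\ lin_op U, (forall x y, ip (U (P x)) (U (P y)) = ip (P x) (P y)),
      (forall x, Q (U (P x)) = U (P x)) & (forall y, exists x, U (P x) = Q y)].

Variables (n : nat) (P : 'I_n -> H -> H) (i0 : 'I_n) (U : 'I_n -> H -> H).
Hypotheses (P_proj : forall a, sa_proj ip (P a))
  (P_orth : forall a b, a != b -> forall x, P a (P b x) = 0)
  (U_unitary : forall a, range_unitary (P i0) (P a) (U a)).

Lemma lin_op_P a : lin_op (P a). Proof. by case: (P_proj a). Qed.
Lemma P_idem a x : P a (P a x) = P a x. Proof. by case: (P_proj a). Qed.
Lemma P_sa a x y : ip (P a x) y = ip x (P a y). Proof. by case: (P_proj a). Qed.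

(* [transfer a] maps ran P_i0 unitarily onto ran P_a; [retract a] inverts it
   on ran P_a and vanishes on ker P_a. *)
Definition transfer a z := U a (P i0 z).

Lemma lin_op_transfer a : lin_op (transfer a).
Proof. by case: (U_unitary a) => linU _ _ _; exact: lin_op_comp (lin_op_P i0). Qed.

Lemma ip_transfer a z z' : ip (transfer a z) (transfer a z') = ip (P i0 z) (P i0 z').
Proof. by case: (U_unitary a) => _ isoU _ _; exact: isoU. Qed.

Lemma P_transfer a z : P a (transfer a z) = transfer a z.
Proof. by case: (U_unitary a) => _ _ intoU _; exact: intoU. Qed.

Lemma transfer_inj a z z' : transfer a z = transfer a z' -> P i0 z = P i0 z'.
Proof.
move=> eq_zz'; apply/eqP; rewrite -subr_eq0 -(lin_opB (lin_op_P i0)); apply/eqP/ip_def.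
by rewrite -(ip_transfer a) (lin_opB (lin_op_transfer a)) eq_zz' subrr (ip0l ipL).
Qed.

Lemma exists_transfer a y : exists x, transfer a x == P a y.
Proof. by case: (U_unitary a) => _ _ _ /(_ y) [x <-]; exists x. Qed.

Definition retract a y := P i0 (xchoose (exists_transfer a y)).

Lemma P_retract a y : P i0 (retract a y) = retract a y.
Proof. exact: P_idem. Qed.

Lemma transfer_retract a y : transfer a (retract a y) = P a y.
Proof.
by rewrite /transfer P_retract; apply/eqP; exact: (xchooseP (exists_transfer a y)).
Qed.

Lemma retract_transfer a z : retract a (transfer a z) = P i0 z.
Proof.
rewrite -[LHS]P_retract; apply: (@transfer_inj a).
by rewrite transfer_retract P_transfer.
Qed.

Lemma retract_eq0 a y : P a y = 0 -> retract a y = 0.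
Proof.
move=> Py0; rewrite -P_retract -(lin_op0 (lin_op_P i0)); apply: (@transfer_inj a).
by rewrite transfer_retract Py0 (lin_op0 (lin_op_transfer a)).
Qed.

Lemma lin_op_retract a : lin_op (retract a).
Proof.
move=> s y y'; transitivity (P i0 (s *: retract a y + retract a y')).
  rewrite -[LHS]P_retract; apply: (@transfer_inj a).
  by rewrite transfer_retract lin_op_transfer !transfer_retract lin_op_P.
by rewrite lin_op_P !P_retract.
Qed.

Definition matrix_unit a b y := transfer a (retract b y).

Lemma lin_op_matrix_unit a b : lin_op (matrix_unit a b).
Proof. exact: lin_op_comp (lin_op_transfer a) (lin_op_retract b). Qed.

Lemma matrix_unit_diag a y : matrix_unit a a y = P a y.
Proof. exact: transfer_retract. Qed.

Lemma matrix_unit_mul a b c d y :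
  matrix_unit a b (matrix_unit c d y) = (b == c)%:R *: matrix_unit a d y.
Proof.
rewrite /matrix_unit; have [<-|neq_bc] := eqVneq b c.
  by rewrite retract_transfer P_retract scale1r.
rewrite scale0r retract_eq0 ?(lin_op0 (lin_op_transfer a)) //.
by rewrite -P_transfer P_orth.
Qed.

Lemma ip_matrix_unit_l a b x y :
  ip (matrix_unit a b x) y = ip (retract b x) (retract a y).
Proof.
by rewrite /matrix_unit -P_transfer P_sa -transfer_retract ip_transfer !P_retract.
Qed.

Lemma ip_matrix_unit_r a b x y :
  ip x (matrix_unit b a y) = ip (retract b x) (retract a y).
Proof.
by rewrite /matrix_unit -P_transfer -P_sa -transfer_retract ip_transfer !P_retract.
Qed.

Lemma matrix_unit_adj a b x y : ip (matrix_unit a b x) y = ip x (matrix_unit b a y).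
Proof. by rewrite ip_matrix_unit_l ip_matrix_unit_r. Qed.
End MatrixUnitsOfProjections.

Lemma embedded_unit_frame (R : rcfType) (K : numFieldType) (emb : {rmorphism R -> K})
    n m (r : 'I_n -> K) :
  (forall a, exists2 t, 0 <= t & emb t = r a) -> \sum_a r a = m%:R -> (n <= m)%N ->
  exists c : 'I_m -> 'I_n -> R,
    (forall j, \sum_a emb (c j a) * emb (c j a) = 1) /\
    (forall a b, \sum_j emb (c j a) * emb (c j b) = r a *+ (a == b)).
Proof.
move=> /fin_all_exists2[d d_ge0 dE] sum_r le_nm.
have sum_d : \sum_a d a = m%:R.
  apply: (fmorph_inj emb); rewrite rmorph_sum rmorph_nat -sum_r.
  by apply: eq_bigr => a _; rewrite dE.
have [w [w_unit frame_w]] := unit_frame_diag d_ge0 sum_d le_nm.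
exists (fun j a => w j 0 a); split => [j | a b].
  by rewrite -(rmorph1 emb) -(w_unit j) rmorph_sum; apply: eq_bigr => a _; rewrite rmorphM.
have := congr1 (fun M : 'M[R]_n => emb (M a b)) frame_w.
rewrite /= frame_opE !mxE rmorph_sum rmorphMn dE => <-.
by apply: eq_bigr => j _; rewrite rmorphM.
Qed.

Theorem lemma7_for_rcf_scalars (R : rcfType) (K : numFieldType)
    (conj : {rmorphism K -> K}) (emb : {rmorphism R -> K}) (H : lmodType K) :
  (forall t, conj (emb t) = emb t) ->
  (forall x : K, 0 <= x -> exists2 t, 0 <= t & emb t = x) ->
  lemma7_for conj H.
Proof.
move=> conj_emb emb_onto ip [ipL ipC _ ip_def _] n P r m P_proj P_orth _ P_rank r_ge0.
case: n => [|n] in P r P_proj P_orth P_rank r_ge0 * => sum_r le_nm.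
  move: sum_r; rewrite big_ord0 => /esym/eqP; rewrite pnatr_eq0 => /eqP m0; subst m.
  by exists (fun _ x => x); split => [[]|[]|x]; rewrite ?big_ord0.
have [c [c_norm c_gram]] := embedded_unit_frame (fun a => emb_onto _ (r_ge0 a)) sum_r le_nm.
have /fin_all_exists [U U_unitary] : forall a, exists U, range_unitary ip (P ord0) (P a) U.
  exact: P_rank.
have E_lin := lin_op_matrix_unit ipL ip_def P_proj U_unitary.
have E_mul := matrix_unit_mul ipL ip_def P_proj P_orth U_unitary.
have E_adj := matrix_unit_adj P_proj U_unitary.
have E_diag := matrix_unit_diag P_proj U_unitary.
have c_real j a : conj (emb (c j a)) = emb (c j a) by exact: conj_emb.
exists (fun j => vec_proj (matrix_unit U_unitary) (fun a => emb (c j a))); split.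
- move=> j; split; first exact: lin_op_vec_proj.
    exact: vec_proj_idem.
  exact: vec_proj_sa.
- by move=> j i; exact: vec_proj_same_rank.
- by move=> x; rewrite (sum_vec_proj E_diag c_gram).
Qed.

Theorem lemma7 (R : realType) :
  (forall H : lmodType R, lemma7_for (fun x : R => x) H) /\
  (forall H : lmodType (complex R), lemma7_for (fun z : complex R => z^*) H).
Proof.
split => H.
  by apply: (@lemma7_for_rcf_scalars R R idfun idfun) => // x x_ge0; exists x.
apply: (@lemma7_for_rcf_scalars R (complex R) conjc (real_complex R)) => [t|].
  exact: conjc_real.
by case=> a b; rewrite lecE /= => /andP[/eqP -> a_ge0]; exists a.
Qed.
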